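(* Let $G_S(s)=\frac{N_S(s)}{D_S(s)}$ and $G_T(s)=\frac{N_T(s)}{D_T(s)}$ be rational transfer functions of two continuous-time, single-input single-output, linear time-invariant systems (the source system and the target system), each written with coprime real polynomials and nonzero numerator. Assume both $G_S$ and $G_T$ are BIBO stable, and assume $G_S$ is minimum-phase. Then there exists a causal, BIBO stable rational transfer function $G_\alpha(s)$ (the transfer map from the source system to the target system) achieving perfect transfer learning, i.e. such that $G_\alpha(s)G_S(s)=G_T(s)$ (equivalently, for every bounded input $d$, feeding the source output $y_s$ with $Y_s(s)=G_S(s)D(s)$ into $G_\alpha$ yields exactly the target output $y_t$ with $Y_t(s)=G_T(s)D(s)$), if and only if the relative degree of $G_S$ is less than or equal to the relative degree of $G_T$. *)

From HB Require Import structures.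
From mathcomp Require Import all_boot all_order all_algebra.
From mathcomp Require Import complex reals.
Set Implicit Arguments. Unset Strict Implicit. Unset Printing Implicit Defensive.
Import Order.TTheory GRing.Theory Num.Theory.
Local Open Scope ring_scope.

(* A rational transfer function G(s) = N(s)/D(s) is represented by the pair
   (N, D) of real polynomials. *)

Definition cpoly (R : rcfType) (p : {poly R}) : {poly R[i]} :=
  map_poly (fun x : R => (x%:C)%C) p.

Definition coprime_rep (R : rcfType) (N D : {poly R}) : Prop :=
  [/\ N != 0, D != 0 & coprimep N D].

Definition causal_tf (R : rcfType) (N D : {poly R}) : Prop :=
  (size N <= size D)%N.

Definition hurwitz (R : rcfType) (D : {poly R}) : Prop :=
  forall z : R[i], root (cpoly D) z -> complex.Re z < 0.

(* BIBO stability of a rational transfer function given in coprime form: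
   proper and all poles in the open left half-plane *)
Definition bibo_stable (R : rcfType) (N D : {poly R}) : Prop :=
  causal_tf N D /\ hurwitz D.

Definition minimum_phase (R : rcfType) (N D : {poly R}) : Prop :=
  forall z : R[i], root (cpoly N) z -> complex.Re z < 0.

Definition rel_deg (R : rcfType) (N D : {poly R}) : int :=
  (size D)%:Z - (size N)%:Z.

(** The only candidate transfer map is the quotient G_T / G_S = (N_T D_S) / (D_T N_S),
    written in lowest terms.  Its poles are roots of D_T N_S, hence stable because G_T
    is stable and G_S is minimum-phase; it is proper exactly when
    deg (N_T D_S) <= deg (D_T N_S), i.e. when the relative degree of G_S does not exceed
    that of G_T.  Conversely, a proper N_a / D_a with N_a N_S D_T = N_T D_a D_S forces
    this degree inequality. *)

From HB Require Import structures.
From mathcomp Require Import all_boot all_order all_algebra.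
From mathcomp Require Import complex reals.
From mathcomp Require Import zify.
Import Order.TTheory GRing.Theory Num.Theory.
Local Open Scope ring_scope.

Section Hurwitz.

Variable R : rcfType.
Implicit Types p q : {poly R}.

Lemma cpolyE p : cpoly p = map_poly (real_complex R) p.
Proof. by []. Qed.

Lemma hurwitzM p q : hurwitz p -> hurwitz q -> hurwitz (p * q).
Proof.
move=> hp hq z; rewrite cpolyE rmorphM rootM.
by case/orP; [exact: hp | exact: hq].
Qed.

Lemma hurwitz_dvdp p q : p %| q -> hurwitz q -> hurwitz p.
Proof.
move=> pq hq z rz; apply: hq; apply: root_dvdp rz.
by rewrite !cpolyE dvdp_map.
Qed.

End Hurwitz.

Lemma leq_size_cross (R : idomainType) (a b p q : {poly R}) :
  a != 0 -> b != 0 -> p != 0 -> q != 0 ->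
  a * p = b * q -> (size a <= size b)%N -> (size q <= size p)%N.
Proof.
move=> a0 b0 p0 q0 E; have := congr1 (fun r : {poly R} => size r) E.
rewrite !size_mul // -!subn1.
by move: a0 b0 p0 q0; rewrite -!size_poly_gt0; lia.
Qed.

Lemma leq_size_divp_gcd (F : fieldType) (p q : {poly F}) :
  q != 0 -> (size p <= size q)%N ->
  (size (p %/ gcdp p q)%R <= size (q %/ gcdp p q)%R)%N.
Proof.
move=> q0 pq; have g0 : gcdp p q != 0 by rewrite gcdp_eq0 negb_and q0 orbT.
by rewrite !size_divp //; apply: leq_sub2r.
Qed.

Lemma rel_deg_leE (R : rcfType) (NS DS NT DT : {poly R}) :
  NS != 0 -> DS != 0 -> NT != 0 -> DT != 0 ->
  (rel_deg NS DS <= rel_deg NT DT) = (size (NT * DS)%R <= size (NS * DT)%R)%N.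
Proof.
move=> + + + +; rewrite -!size_poly_gt0 => NS0 DS0 NT0 DT0.
rewrite /rel_deg !size_mul -?size_poly_gt0 // -!subn1.
set nS := size NS; set dS := size DS; set nT := size NT; set dT := size DT.
by apply/idP/idP; lia.
Qed.

Theorem theorem1 (R : realType) (NS DS NT DT : {poly R}) :
  coprime_rep NS DS -> coprime_rep NT DT ->
  bibo_stable NS DS -> bibo_stable NT DT ->
  minimum_phase NS DS ->
  ((exists Na Da : {poly R},
      [/\ Da != 0, coprimep Na Da, causal_tf Na Da, bibo_stable Na Da
        & Na * NS * DT = NT * Da * DS])
   <-> rel_deg NS DS <= rel_deg NT DT).
Proof.
move=> [NS0 DS0 _] [NT0 DT0 _] _ [_ stable_DT] min_phase_S.
rewrite rel_deg_leE //; set P := NT * DS; set Q := NS * DT.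
have P0 : P != 0 by rewrite mulf_neq0.
have Q0 : Q != 0 by rewrite mulf_neq0.
split.
- move=> [Na [Da [Da0 _ causal _ E]]].
  have E' : Na * Q = Da * P by rewrite mulrA E mulrAC mulrC.
  have Na0 : Na != 0.
    by apply: contra_neq (mulf_neq0 Da0 P0) => Na0; rewrite -E' Na0 mul0r.
  exact: leq_size_cross Na0 Da0 Q0 P0 E' causal.
- move=> PQ; set g := gcdp P Q.
  exists (P %/ g), (Q %/ g); split.
  + by rewrite dvdp_div_eq0 ?dvdp_gcdr.
  + by apply: coprimep_div_gcd; rewrite P0.
  + exact: leq_size_divp_gcd.
  + split; first exact: leq_size_divp_gcd.
    apply: hurwitz_dvdp (divp_dvd (dvdp_gcdr P Q)) _.
    exact: hurwitzM.
  + rewrite -mulrA -/Q mulrC -(divp_mulCA (dvdp_gcdl P Q) (dvdp_gcdr P Q)).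
    by rewrite /P [RHS]mulrAC.
Qed.
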